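(* Let $R$ be a commutative ring and let $R^{(-1)}R$ denote the pointwise localization of $R$ with respect to the subset $S=R$. Then $\mathrm{Spec}(R^{(-1)}R)$ is Hausdorff with respect to the Zariski topology, and also Hausdorff with respect to the flat topology.
   Context: For $a,b$ in a commutative ring, $b$ is a pointwise inverse of $a$ if $a=a^2b$ and $b=b^2a$. For a subset $S\subseteq R$, $S^{(-1)}R=R[x_s:s\in S]/I$ where $I$ is generated by $sx_s^2-x_s$ and $s^2x_s-s$ ($s\in S$). The flat topology on $\mathrm{Spec}(A)$ is the topology having as a basis of open sets the sets $V(I)=\{\mathfrak p:I\subseteq\mathfrak p\}$ with $I$ ranging over finitely generated ideals of $A$. *)

From HB Require Import structures.
From mathcomp Require Import all_boot all_order all_algebra.
Set Implicit Arguments. Unset Strict Implicit. Unset Printing Implicit Defensive.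
Import GRing.Theory.
Local Open Scope ring_scope.

(* A (with structure map phi : R -> A and elements x_s := x s) is the
   pointwise localization  R^{(-1)}R = R[x_s : s in R] / I, where I is
   generated by s x_s^2 - x_s and s^2 x_s - s.  Since MathComp has no
   polynomial rings in infinitely many variables, we describe this presented
   R-algebra by its defining universal property (presentation by generators
   x_s and relations s x_s^2 = x_s, s^2 x_s = s). *)
Definition is_pointwise_localization (R A : comPzRingType)
    (phi : {rmorphism R -> A}) (x : R -> A) : Prop :=
  (forall s : R, phi s * x s ^+ 2 = x s /\ phi s ^+ 2 * x s = phi s) /\
  forall (B : comPzRingType) (psi : {rmorphism R -> B}) (y : R -> B),
    (forall s : R, psi s * y s ^+ 2 = y s /\ psi s ^+ 2 * y s = psi s) ->
    (exists theta : {rmorphism A -> B},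
        (forall r, theta (phi r) = psi r) /\ (forall s, theta (x s) = y s)) /\
    (forall th1 th2 : {rmorphism A -> B},
        (forall r, th1 (phi r) = th2 (phi r)) ->
        (forall s, th1 (x s) = th2 (x s)) ->
        forall a, th1 a = th2 a).

Definition is_prime_ideal (A : comPzRingType) (P : A -> Prop) : Prop :=
  [/\ P 0,
      (forall a b, P a -> P b -> P (a + b)),
      (forall r a, P a -> P (r * a)),
      ~ P 1 &
      (forall a b, P (a * b) -> P a \/ P b)].

Definition Spec (A : comPzRingType) := {P : A -> Prop | is_prime_ideal P}.

Definition ideal_span (A : comPzRingType) (l : seq A) : A -> Prop :=
  fun a => exists c : seq A, a = \sum_(i < size l) c`_i * l`_i.

Definition V (A : comPzRingType) (I : A -> Prop) : Spec A -> Prop :=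
  fun p => forall a, I a -> sval p a.

Definition zariski_open (A : comPzRingType) (U : Spec A -> Prop) : Prop :=
  exists E : A -> Prop, forall p, U p <-> ~ V E p.

Definition flat_open (A : comPzRingType) (U : Spec A -> Prop) : Prop :=
  forall p, U p -> exists l : seq A,
    V (ideal_span l) p /\ (forall q, V (ideal_span l) q -> U q).

Definition hausdorff (T : Type) (is_open : (T -> Prop) -> Prop) : Prop :=
  forall p q : T, p <> q ->
    exists U W : T -> Prop, [/\ is_open U, is_open W, U p, W q &
                              forall r, ~ (U r /\ W r)].

(* Since [x s] is a pointwise inverse of [phi s], [phi s * x s] is an idempotent
   lying in exactly the same primes of [A] as [phi s].  Two distinct primes [P], [Q]
   of [A] already differ on [phi R]: if they have the same contraction, every element
   of [A] is congruent modulo [P] and [Q] to a fraction [phi r / phi t] with [phi t]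
   outside [P] (these elements form a subring containing the generators, hence all of
   [A]), and this forces [P] = [Q].  So distinct primes are separated by an idempotent
   [e], i.e. by the disjoint Zariski-open sets [D(1 - e)] and [D(e)], and by the
   disjoint flat-open sets [V(e)] and [V(1 - e)]. *)
From HB Require Import structures.
From mathcomp Require Import all_boot all_order all_algebra ring.
From mathcomp Require Import boolp.
Import GRing.Theory.
Local Open Scope ring_scope.

Definition ideal {A : comPzRingType} (I : A -> Prop) : Prop :=
  [/\ I 0, forall a b, I a -> I b -> I (a + b) & forall r a, I a -> I (r * a)].

Section Ideals.
Context {A : comPzRingType} {I : A -> Prop} (idI : ideal I).

Lemma ideal0 : I 0. Proof. by case: idI. Qed.

Lemma idealD a b : I a -> I b -> I (a + b). Proof. by case: idI => _ + _; apply. Qed.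

Lemma idealMl r a : I a -> I (r * a). Proof. by case: idI => _ _; apply. Qed.

Lemma idealMr r a : I a -> I (a * r). Proof. by rewrite mulrC; apply: idealMl. Qed.

Lemma idealB a b : I a -> I b -> I (a - b).
Proof. by move=> Ia Ib; apply: idealD => //; rewrite -mulN1r; apply: idealMl. Qed.

End Ideals.

Lemma idealI {A : comPzRingType} {I J : A -> Prop} :
  ideal I -> ideal J -> ideal (fun a => I a /\ J a).
Proof.
move=> idI idJ; split; first by split; apply: ideal0.
  by move=> a b [Ia Ja] [Ib Jb]; split; apply: idealD.
by move=> r a [Ia Ja]; split; apply: idealMl.
Qed.

Section PrimeIdeals.
Context {A : comPzRingType} {P : A -> Prop} (hP : is_prime_ideal P).

Lemma prime_ideal_ideal : ideal P. Proof. by case: hP. Qed.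

Lemma prime_ideal_not1 : ~ P 1. Proof. by case: hP. Qed.

Lemma prime_idealM {a b} : P (a * b) -> P a \/ P b. Proof. by case: hP => _ _ _ _; apply. Qed.

Lemma prime_idealMn a b : ~ P a -> ~ P b -> ~ P (a * b).
Proof. by move=> Pa Pb /prime_idealM []. Qed.

Lemma prime_ideal_idem {e} : e * e = e -> P e \/ P (1 - e).
Proof.
move=> ee; apply: prime_idealM; rewrite mulrBr mulr1 ee subrr.
exact: ideal0 prime_ideal_ideal.
Qed.

Lemma prime_ideal_idemN {e} : P e -> ~ P (1 - e).
Proof.
move=> Pe Pe'; apply: prime_ideal_not1; rewrite -(subrK e 1).
exact: idealD prime_ideal_ideal _ _ Pe' Pe.
Qed.

End PrimeIdeals.

Lemma idem_mul_pinv {A : comPzRingType} (a b : A) :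
  a ^+ 2 * b = a -> (a * b) * (a * b) = a * b.
Proof.
move=> aab; have -> : a * b * (a * b) = a ^+ 2 * b * b by ring.
by rewrite aab.
Qed.

Lemma prime_ideal_mul_pinv {A : comPzRingType} {P : A -> Prop} {a b : A} :
  is_prime_ideal P -> a ^+ 2 * b = a -> P a <-> P (a * b).
Proof.
move=> hP aab; split=> [|Pab]; first exact: idealMr (prime_ideal_ideal hP) _ _.
by rewrite -aab expr2 -mulrA; apply: idealMl (prime_ideal_ideal hP) _ _ Pab.
Qed.

Lemma Spec_ext {A : comPzRingType} (p q : Spec A) :
  (forall a, sval p a <-> sval q a) -> p = q.
Proof.
case: p q => [P hP] [Q hQ] /= PQ.
have eqPQ : P = Q by apply: funext => a; apply: propext.
by subst Q; congr exist; apply: Prop_irrelevance.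
Qed.

Lemma V_span1 {A : comPzRingType} (p : Spec A) (e : A) :
  V (ideal_span [:: e]) p <-> sval p e.
Proof.
case: p => P hP /=; split => [|Pe a [c ->]].
  by apply; exists [:: 1]; rewrite big_ord1 mul1r.
by rewrite big_ord1; apply: idealMl (prime_ideal_ideal hP) _ _ Pe.
Qed.

Lemma zariski_open_nmem {A : comPzRingType} (e : A) :
  zariski_open (fun p : Spec A => ~ sval p e).
Proof.
exists (fun a => a = e) => p; split=> [npe Ve | nVe pe]; first by apply/npe/Ve.
by apply: nVe => _ ->.
Qed.

Lemma flat_open_mem {A : comPzRingType} (e : A) :
  flat_open (fun p : Spec A => sval p e).
Proof. by move=> p pe; exists [:: e]; split=> [|q]; rewrite V_span1. Qed.

Definition separated {T : Type} (is_open : (T -> Prop) -> Prop) (p q : T) : Prop :=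
  exists U W : T -> Prop,
    [/\ is_open U, is_open W, U p, W q & forall r, ~ (U r /\ W r)].

Lemma separated_sym {T : Type} (is_open : (T -> Prop) -> Prop) (p q : T) :
  separated is_open p q -> separated is_open q p.
Proof.
case=> U [W [oU oW Up Wq UW]]; exists W, U.
by split=> // r [Wr Ur]; apply: (UW r).
Qed.

Section IdempotentSeparation.
Context {A : comPzRingType} {e : A} (ee : e * e = e).

Lemma idempotent_separated_zariski (p q : Spec A) :
  sval p e -> ~ sval q e -> separated (@zariski_open A) p q.
Proof.
move=> pe nqe; exists (fun r => ~ sval r (1 - e)), (fun r => ~ sval r e).
split=> //=; [exact: zariski_open_nmem | exact: zariski_open_nmem | |].
  exact: (prime_ideal_idemN (svalP p) pe).
by case=> r hr /= [] /[swap]; case: (prime_ideal_idem hr ee).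
Qed.

Lemma idempotent_separated_flat (p q : Spec A) :
  sval p e -> ~ sval q e -> separated (@flat_open A) p q.
Proof.
move=> pe nqe; exists (fun r => sval r e), (fun r => sval r (1 - e)).
split=> //=; [exact: flat_open_mem | exact: flat_open_mem | |].
  by case: (prime_ideal_idem (svalP q) ee).
by case=> r hr /= [re]; exact: (prime_ideal_idemN hr re).
Qed.

Lemma idempotent_separated {p q : Spec A} : ~ (sval p e <-> sval q e) ->
  separated (@zariski_open A) p q /\ separated (@flat_open A) p q.
Proof.
move=> pq; have [pe|npe] := pselect (sval p e).
  have nqe : ~ sval q e by move=> qe; apply: pq.
  by split; [apply: idempotent_separated_zariski | apply: idempotent_separated_flat].
have qe : sval q e by apply: contra_notP pq => nqe; split.
by split; apply: separated_sym;
  [apply: idempotent_separated_zariski | apply: idempotent_separated_flat].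
Qed.

End IdempotentSeparation.

Section SubringGeneration.
Context {R A : comPzRingType} {phi : {rmorphism R -> A}} {x : R -> A} {S : {pred A}}.
Hypotheses (Sring : subring_closed S) (Sphi : forall r, phi r \in S)
  (Sx : forall s, x s \in S).

Definition subring_of := {a : A | a \in S}.
HB.instance Definition _ := [isSub for (@proj1_sig A (fun a => a \in S)) : subring_of -> A].
HB.instance Definition _ := [Choice of subring_of by <:].
HB.instance Definition _ := GRing.SubChoice_isSubComPzRing.Build A S subring_of Sring.

Definition phiS (r : R) : subring_of := Sub (phi r) (Sphi r).
Definition xS (s : R) : subring_of := Sub (x s) (Sx s).

Lemma phiS_zmod_morphism : zmod_morphism phiS.
Proof. by move=> a b; apply: val_inj; rewrite /= rmorphB. Qed.

Lemma phiS_monoid_morphism : monoid_morphism phiS.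
Proof. by split=> [|a b]; apply: val_inj; rewrite /= (rmorph1, rmorphM). Qed.

HB.instance Definition _ := GRing.isZmodMorphism.Build R subring_of phiS phiS_zmod_morphism.
HB.instance Definition _ := GRing.isMonoidMorphism.Build R subring_of phiS phiS_monoid_morphism.

Lemma pointwise_localization_subring_full :
  is_pointwise_localization phi x -> forall a, a \in S.
Proof.
case=> rel univ a.
have relS s : phiS s * xS s ^+ 2 = xS s /\ phiS s ^+ 2 * xS s = phiS s.
  by case: (rel s) => r1 r2; split; apply: val_inj; rewrite /= ?rmorphM ?rmorphXn.
have [[theta [theta_phi theta_x]] _] := univ _ phiS xS relS.
have [_ /(_ idfun (val \o theta)) eq_val] := univ _ phi x rel.
have -> : a = val (theta a).
  by apply: eq_val => [r|s] /=; rewrite ?theta_phi ?theta_x.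
exact: valP.
Qed.

End SubringGeneration.

Section LocalFractions.
Context {R A : comPzRingType} (phi : {rmorphism R -> A}) {P J : A -> Prop}.
Hypotheses (hP : is_prime_ideal P) (idJ : ideal J).

(* [a = phi r / phi t] modulo [J], with denominator outside [P]. *)
Definition local_fraction (a : A) : Prop :=
  exists r t, ~ P (phi t) /\ J (a * phi t - phi r).

Lemma local_fraction_phi r : local_fraction (phi r).
Proof.
exists r, 1; rewrite rmorph1 mulr1 subrr.
by split; [exact: prime_ideal_not1 | exact: ideal0].
Qed.

Lemma local_fractionB a b :
  local_fraction a -> local_fraction b -> local_fraction (a - b).
Proof.
move=> [r1 [t1 [Pt1 Ja]]] [r2 [t2 [Pt2 Jb]]].
exists (r1 * t2 - r2 * t1), (t1 * t2); rewrite rmorphM; split.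
  exact: prime_idealMn.
have -> : (a - b) * (phi t1 * phi t2) - phi (r1 * t2 - r2 * t1) =
    (a * phi t1 - phi r1) * phi t2 - (b * phi t2 - phi r2) * phi t1.
  by rewrite rmorphB !rmorphM; ring.
by apply: idealB => //; apply: idealMr.
Qed.

Lemma local_fractionM a b :
  local_fraction a -> local_fraction b -> local_fraction (a * b).
Proof.
move=> [r1 [t1 [Pt1 Ja]]] [r2 [t2 [Pt2 Jb]]].
exists (r1 * r2), (t1 * t2); rewrite rmorphM; split.
  exact: prime_idealMn.
have -> : a * b * (phi t1 * phi t2) - phi (r1 * r2) =
    (a * phi t1 - phi r1) * (b * phi t2) + phi r1 * (b * phi t2 - phi r2).
  by rewrite rmorphM; ring.
by apply: idealD => //; [apply: idealMr | apply: idealMl].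
Qed.

Lemma local_fraction_subring_closed :
  subring_closed [pred a | `[< local_fraction a >]].
Proof.
split; rewrite ?inE.
- by apply/asboolP; rewrite -(rmorph1 phi); apply: local_fraction_phi.
- by move=> a b /asboolP La /asboolP Lb; apply/asboolP/local_fractionB.
- by move=> a b /asboolP La /asboolP Lb; apply/asboolP/local_fractionM.
Qed.

End LocalFractions.

Arguments local_fraction {R A} phi P J a.

Section SameContraction.
Context {R A : comPzRingType} {phi : {rmorphism R -> A}} {x : R -> A}.
Hypothesis hA : is_pointwise_localization phi x.
Context {P Q : A -> Prop}.
Hypotheses (hP : is_prime_ideal P) (hQ : is_prime_ideal Q)
  (PQphi : forall r, P (phi r) <-> Q (phi r)).

Let PQ a := P a /\ Q a.
Let idP := prime_ideal_ideal hP.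
Let idQ := prime_ideal_ideal hQ.
Let idPQ : ideal PQ := idealI idP idQ.

Lemma local_fraction_x s : local_fraction phi P PQ (x s).
Proof.
have [xsxs sxs] := hA.1 s.
have [Ps|nPs] := pselect (P (phi s)).
  exists 0, 1; rewrite rmorph1 rmorph0 mulr1 subr0 -xsxs.
  split; first exact: prime_ideal_not1.
  by apply: (idealMr idPQ); split; last apply/PQphi.
exists 1, s; rewrite rmorph1; split=> //.
have inv_mod T : is_prime_ideal T -> ~ T (phi s) -> T (x s * phi s - 1).
  move=> hT nTs; suff: T (phi s * (x s * phi s - 1)) by case/(prime_idealM hT).
  have -> : phi s * (x s * phi s - 1) = phi s ^+ 2 * x s - phi s by ring.
  by rewrite sxs subrr; apply: ideal0 (prime_ideal_ideal hT).
by split; apply: inv_mod => //; rewrite -PQphi.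
Qed.

Lemma same_contraction_sub a : P a -> Q a.
Proof.
have Lsub := local_fraction_subring_closed phi hP idPQ.
have Lphi r : phi r \in [pred a | `[< local_fraction phi P PQ a >]].
  by rewrite inE; apply/asboolP/local_fraction_phi.
have Lx s : x s \in [pred a | `[< local_fraction phi P PQ a >]].
  by rewrite inE; apply/asboolP/local_fraction_x.
move=> Pa; have := pointwise_localization_subring_full Lsub Lphi Lx hA a.
rewrite inE => /asboolP [r [t [nPt [Pat Qat]]]].
have Qr : Q (phi r).
  apply/PQphi; rewrite -[phi r](subKr (a * phi t)).
  exact: idealB idP _ _ (idealMr idP _ _ Pa) Pat.
have Qat' : Q (a * phi t).
  by rewrite -(subrK (phi r) (a * phi t)); apply: idealD idQ _ _ Qat Qr.
by have [|/PQphi] := prime_idealM hQ Qat'.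
Qed.

End SameContraction.

Section PointwiseLocalizationSpec.
Context {R A : comPzRingType} {phi : {rmorphism R -> A}} {x : R -> A}.
Hypothesis hA : is_pointwise_localization phi x.

Lemma pointwise_localization_Spec_inj (p q : Spec A) :
  (forall r, sval p (phi r) <-> sval q (phi r)) -> p = q.
Proof.
move=> pq; apply: Spec_ext => a; split.
  exact: (same_contraction_sub hA (svalP p) (svalP q) pq a).
exact: (same_contraction_sub hA (svalP q) (svalP p) (fun r => iff_sym (pq r)) a).
Qed.

Lemma pointwise_localization_separating_idempotent {p q : Spec A} : p <> q ->
  exists e : A, e * e = e /\ ~ (sval p e <-> sval q e).
Proof.
move=> npq; have [[r pqr]|] := pselect (exists r, ~ (sval p (phi r) <-> sval q (phi r))).
  have sxs := (hA.1 r).2.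
  exists (phi r * x r); split; first exact: idem_mul_pinv.
  by rewrite -!(prime_ideal_mul_pinv (svalP _) sxs).
move=> same; case: npq; apply: pointwise_localization_Spec_inj => r.
by apply: contra_notP same => ?; exists r.
Qed.

End PointwiseLocalizationSpec.

Theorem lemma3p7 (R A : comPzRingType) (phi : {rmorphism R -> A}) (x : R -> A)
  (hA : is_pointwise_localization phi x) :
  hausdorff (@zariski_open A) /\ hausdorff (@flat_open A).
Proof.
have separated_all p q : p <> q ->
    separated (@zariski_open A) p q /\ separated (@flat_open A) p q.
  move=> npq; have [e [ee pq]] := pointwise_localization_separating_idempotent hA npq.
  exact: (idempotent_separated ee pq).
by split=> p q /separated_all [].
Qed.
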